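(* For every integer $k\ge 1$, the number of unlabeled connected $k$-vertex graphs with at most $k-1+\frac{k}{\ln k}$ edges is less than $100^k$.
   Context: Graphs are finite and simple; unlabeled means counted up to isomorphism. For $k=1$ the quantity $k/\ln k$ is interpreted as imposing no constraint beyond $k-1=0$ edges (the only graph is the single vertex). *)

From Stdlib Require Import Reals.
From mathcomp Require Import all_boot all_order fingroup perm.
Set Implicit Arguments. Unset Strict Implicit. Unset Printing Implicit Defensive.

Definition graph (k : nat) := {set {set 'I_k}}.

Definition simple_graph k (E : graph k) : bool :=
  [forall e in E, #|e| == 2].

Definition adj k (E : graph k) : rel 'I_k :=
  fun x y => (x != y) && ([set x; y] \in E).

Definition connectedb k (E : graph k) : bool :=
  [forall x, forall y, connect (adj E) x y].

Definition isob k (E1 E2 : graph k) : bool :=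
  [exists s : {perm 'I_k}, E2 == [set [set s x | x in e] | e : {set 'I_k} in E1]].

(* Edge bound m <= k - 1 + k / ln k ; for k = 1 it means m <= 0 = k - 1. *)
Definition edge_bound_ok (k m : nat) : bool :=
  if (k <= 1)%N then (m <= k - 1)%N
  else if Rle_dec (INR m) (Rplus (INR (k - 1)) (Rdiv (INR k) (ln (INR k))))
       then true else false.

Definition good k (E : graph k) : bool :=
  [&& simple_graph E, connectedb E & edge_bound_ok k #|E|].

Definition num_unlabeled_good (k : nat) : nat :=
  #|[set [set H : graph k | isob G H] | G : graph k in [pred G | good G]]|.

(* Proof idea: an injective-enough encoding.  Relabel a connected graph G on
   k = n + 1 vertices along a breadth-first search from vertex 0.  Then every
   vertex j > 0 has a parent p j < j adjacent to it, and the parent function is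
   nondecreasing on {1, ..., n}.  Such a BFS tree is determined by the subset
   {p j + j | 0 < j} of {0, ..., 2n + 1}, so there are at most 2 ^ (2k) trees.
   The remaining at most M = #|G| - n edges are listed by a function from
   'I_M to vertex pairs, giving at most (k ^ 2) ^ M choices.  The edge bound
   says M * ln k <= k, hence k ^ M <= e ^ k <= 3 ^ k.  Every isomorphism class
   of counted graphs is thus the class of some decoded code, and there are at
   most 4 ^ k * 9 ^ k = 36 ^ k < 100 ^ k codes. *)
From Stdlib Require Import Reals Lra.
From mathcomp Require Import all_boot all_order fingroup perm zify.

Set Implicit Arguments. Unset Strict Implicit. Unset Printing Implicit Defensive.

Section Relabelling.
Variable k : nat.

Definition act (s : {perm 'I_k}) (E : graph k) : graph k :=
  [set [set s x | x in e] | e : {set 'I_k} in E].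

Lemma act1 (E : graph k) : act 1 E = E.
Proof.
rewrite /act -[RHS]imset_id; apply: eq_imset => e.
by rewrite -[RHS]imset_id; apply: eq_imset => x; rewrite perm1.
Qed.

Lemma actM (s t : {perm 'I_k}) (E : graph k) : act (s * t)%g E = act t (act s E).
Proof.
rewrite /act -imset_comp; apply: eq_imset => e /=.
by rewrite -imset_comp; apply: eq_imset => x /=; rewrite permM.
Qed.

Lemma isobP (E1 E2 : graph k) : reflect (exists s, E2 = act s E1) (isob E1 E2).
Proof. by apply: (iffP existsP) => [[s /eqP ->]|[s ->]]; exists s. Qed.

Lemma isob_class (E D : graph k) :
  isob E D -> [set H | isob E H] = [set H | isob D H].
Proof.
move=> /isobP [s ->]; apply/setP => H; rewrite !inE.
apply/isobP/isobP => [[t ->]|[t ->]].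
  by exists (s^-1 * t)%g; rewrite actM -(actM s) mulgV act1.
by exists (s * t)%g; rewrite actM.
Qed.

Lemma card_act (s : {perm 'I_k}) (E : graph k) : #|act s E| = #|E|.
Proof. by rewrite card_imset //; apply: imset_inj; apply: perm_inj. Qed.

Lemma simple_graphP (E : graph k) :
  reflect (forall e, e \in E -> #|e| = 2) (simple_graph E).
Proof.
apply: (iffP forallP) => [E2 e eE|E2 e]; last by apply/implyP => /E2 ->.
by apply/eqP; move: (E2 e); rewrite eE.
Qed.

Lemma simple_act (s : {perm 'I_k}) (E : graph k) :
  simple_graph E -> simple_graph (act s E).
Proof.
move=> /simple_graphP E2; apply/simple_graphP => e /imsetP [e0 e0E ->].
by rewrite card_imset ?E2 //; apply: perm_inj.
Qed.
End Relabelling.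

Lemma connect_cross (T : finType) (r : rel T) (A : {set T}) x y :
  x \in A -> y \notin A -> connect r x y ->
  exists a b, [/\ a \in A, b \notin A & r a b].
Proof.
move=> xA yA /connectP [q pth yeq]; rewrite yeq in yA; clear yeq.
elim: q x xA pth yA => [|z q IH] x xA /= => [_|/andP [rxz pth]] yA.
  by rewrite xA in yA.
case zA: (z \in A); first exact: IH zA pth yA.
by exists x, z; rewrite zA.
Qed.

Section BFS.
Variables (k : nat) (G : graph k).

(* The first n vertices w 0, ..., w (n-1) of a breadth-first search with
   parent function p: each later vertex is adjacent to an earlier parent,
   parents are nondecreasing, and the vertices before the current parent have
   all their neighbours already listed. *)
Record bfs_prefix (n : nat) (w : nat -> 'I_k) (p : nat -> nat) : Prop := {
  bfs_pos : 0 < n;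
  bfs_inj : forall i j, i < n -> j < n -> w i = w j -> i = j;
  bfs_parent : forall j, 0 < j < n -> p j < j /\ adj G (w (p j)) (w j);
  bfs_mono : forall i j, 0 < i -> i <= j -> j < n -> p i <= p j;
  bfs_closed : forall i y, i < p n.-1 -> adj G (w i) y ->
    exists2 j, j < n & w j = y }.

Definition visited n (w : nat -> 'I_k) : {set 'I_k} := [set w (nat_of_ord i) | i : 'I_n].

Lemma visitedP n w y : reflect (exists2 j, j < n & w j = y) (y \in visited n w).
Proof.
apply: (iffP imsetP) => [[i _ ->]|[j jn <-]]; first by exists i.
by exists (Ordinal jn).
Qed.

Lemma card_visited n w p : bfs_prefix n w p -> #|visited n w| = n.
Proof.
case=> _ winj _ _ _; rewrite card_in_imset ?card_ord // => i j _ _ /winj eqij.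
exact/val_inj/eqij.
Qed.

Definition frontier n w (i : nat) : bool :=
  (i < n) && [exists b, adj G (w i) b && (b \notin visited n w)].

Lemma frontier_exists n w p : connectedb G -> n < k -> bfs_prefix n w p ->
  exists i, frontier n w i.
Proof.
move=> conn ltnk bfs.
have [y yA] : exists y, y \notin visited n w.
  apply/existsP; rewrite -negb_forall; apply/negP => /forallP allA.
  have : #|'I_k| <= #|visited n w| by apply/subset_leq_card/subsetP => z _.
  by rewrite card_ord (card_visited bfs) leqNgt ltnk.
have w0A : w 0 \in visited n w by apply/visitedP; exists 0; case: bfs.
have [a [b [/visitedP [i ilt <-] bA ab]]] :=
  connect_cross w0A yA ((forallP ((forallP conn) (w 0))) y).
by exists i; rewrite /frontier ilt; apply/existsP; exists b; rewrite ab bA.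
Qed.

Section Extend.
Variables (n q : nat) (w : nat -> 'I_k) (p : nat -> nat) (c : 'I_k).
Hypothesis bfs : bfs_prefix n w p.
Hypotheses (qn : q < n) (qc : adj G (w q) c) (cA : c \notin visited n w).
Hypothesis qmin : forall i, frontier n w i -> q <= i.

(* Appending the first unlisted neighbour of the earliest frontier vertex. *)
Definition ext_w (i : nat) : 'I_k := if i == n then c else w i.
Definition ext_p (i : nat) : nat := if i == n then q else p i.

Lemma ext_old i : i < n -> ext_w i = w i /\ ext_p i = p i.
Proof. by move=> lt_in; rewrite /ext_w /ext_p ltn_eqF. Qed.

Lemma ext_unlisted j : j < n -> w j <> c.
Proof. by move=> jn wjc; case/negP: cA; apply/visitedP; exists j. Qed.

(* The new parent q is at least every earlier parent: vertices before
   p (n-1) have no unlisted neighbour, while q has one. *)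
Lemma ext_parent_ge i : 0 < i < n -> p i <= q.
Proof.
case/andP => i0 iltn; have [_ _ _ mono closed] := bfs.
apply: (@leq_trans (p n.-1)); first by apply: mono => //; lia.
rewrite leqNgt; apply/negP => /closed /(_ qc) [j jn wjc].
exact: ext_unlisted jn wjc.
Qed.

Lemma bfs_extend : bfs_prefix n.+1 ext_w ext_p.
Proof.
have [n0 winj par mono _] := bfs.
split; first by [].
- move=> i j; rewrite !ltnS => ile jle.
  case: (eqVneq i n) => [->|ine]; case: (eqVneq j n) => [->|jne] //.
  + have jltn : j < n by rewrite ltn_neqAle jne.
    by rewrite (ext_old jltn).1 /ext_w eqxx => /esym /(ext_unlisted jltn).
  + have iltn : i < n by rewrite ltn_neqAle ine.
    by rewrite (ext_old iltn).1 /ext_w eqxx => /(ext_unlisted iltn).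
  + have iltn : i < n by rewrite ltn_neqAle ine.
    have jltn : j < n by rewrite ltn_neqAle jne.
    by rewrite (ext_old iltn).1 (ext_old jltn).1; apply: winj.
- move=> j /andP [j0]; rewrite ltnS leq_eqVlt => /orP [/eqP ->|jn].
    by rewrite /ext_w /ext_p eqxx (ltn_eqF qn).
  have /par [pj adjj] : 0 < j < n by rewrite j0 jn.
  by rewrite (ext_old jn).1 (ext_old jn).2 (ext_old (ltn_trans pj jn)).1.
- move=> i j i0 ij; rewrite ltnS leq_eqVlt => /orP [/eqP jn|jn].
    rewrite jn /ext_p eqxx; case: (eqVneq i n) => [//|ine].
    by apply: ext_parent_ge; rewrite i0 ltn_neqAle ine -jn.
  by rewrite (ext_old jn).2 (ext_old (leq_ltn_trans ij jn)).2; apply: mono.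
- move=> i z /=; rewrite /ext_p eqxx => iq; have iltn := ltn_trans iq qn.
  rewrite (ext_old iltn).1 => iz.
  case zA: (z \in visited n w).
    move/visitedP: zA => [j jn <-]; exists j; first by rewrite ltnS ltnW.
    exact: (ext_old jn).1.
  have : frontier n w i by rewrite /frontier iltn; apply/existsP; exists z; rewrite iz zA.
  by move/qmin; rewrite leqNgt iq.
Qed.
End Extend.

Lemma bfs_step n w p : connectedb G -> n < k -> bfs_prefix n w p ->
  exists w' p', bfs_prefix n.+1 w' p'.
Proof.
move=> conn ltnk bfs.
case: (ex_minnP (frontier_exists conn ltnk bfs)) => q /andP [qn /existsP [c /andP [qc cA]]] qmin.
by exists (ext_w n w c), (ext_p n q p); apply: bfs_extend.
Qed.

Lemma bfs_exists : connectedb G -> 0 < k -> exists w p, bfs_prefix k w p.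
Proof.
move=> conn k0.
suff prefixes m : m < k -> exists w p, bfs_prefix m.+1 w p.
  by have := prefixes k.-1; rewrite ltn_predL prednK //; apply.
elim: m => [_|m IH mk].
  exists (fun _ => Ordinal k0), (fun _ => 0); split => //.
  - by move=> i j; rewrite !ltnS !leqn0 => /eqP -> /eqP ->.
  - by move=> j /andP [j0 j1]; move: j1; rewrite ltnS leqNgt j0.
have [w [p bfs]] := IH (ltnW mk).
exact: bfs_step conn mk bfs.
Qed.
End BFS.

Lemma bfs_relabel n (G : graph n.+1) : connectedb G -> exists s p,
  (forall j, 0 < j < n.+1 -> p j < j /\ [set inord (p j); inord j] \in act s G) /\
  (forall i j, 0 < i -> i <= j -> j < n.+1 -> p i <= p j).
Proof.
move=> conn; have [w [p [_ winj par mono _]]] := bfs_exists conn (ltn0Sn n).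
have injW : injective (fun i : 'I_n.+1 => w i) by move=> i j /winj eqij; exact/val_inj/eqij.
pose sigma := perm injW.
have sigmaV i : i < n.+1 -> (sigma^-1)%g (w i) = inord i.
  by move=> ilt; apply: (@perm_inj _ sigma); rewrite permKV permE /= inordK.
exists (sigma^-1)%g, p; split => // j jr; have [pj /andP [_ e]] := par j jr.
have jlt : j < n.+1 by case/andP: jr.
split => //; apply/imsetP; exists [set w (p j); w j] => //.
by rewrite imsetU1 imset_set1 !sigmaV // (ltn_trans pj jlt).
Qed.

Section TreeCode.
Variable n : nat.

(* A code is a subset S of {0, ..., 2n+1}; its element v of rank r in S
   (counting v itself) decodes to the edge {v - r, r}. *)
Definition rank (S : {set 'I_(n + n).+2}) (v : 'I_(n + n).+2) : nat :=
  #|[set s in S | (s <= v)%N]|.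

Definition tree_decode (S : {set 'I_(n + n).+2}) : graph n.+1 :=
  [set [set (inord (v - rank S v) : 'I_n.+1); inord (rank S v)] | v : 'I_(n + n).+2 in S].

Lemma card_nonzero_upto j : j < n.+1 -> #|[set i : 'I_n.+1 | 0 < i <= j]| = j.
Proof.
move=> jK.
have -> : [set i : 'I_n.+1 | 0 < i <= j] = [set (inord i.+1 : 'I_n.+1) | i : 'I_j].
  apply/setP => x; rewrite inE; apply/idP/imsetP => [/andP [x0 xj]|[i _ ->]].
    have xm : x.-1 < j by lia.
    by exists (Ordinal xm) => //; apply/val_inj; rewrite /= inordK; lia.
  by have li := ltn_ord i; rewrite inordK; lia.
rewrite card_imset ?card_ord // => a b /(congr1 val) /=.
have la := ltn_ord a; have lb := ltn_ord b; rewrite !inordK; try lia.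
by case => /val_inj.
Qed.

Variable p : nat -> nat.
Hypothesis par : forall j, 0 < j < n.+1 -> p j < j.
Hypothesis mono : forall i j, 0 < i -> i <= j -> j < n.+1 -> p i <= p j.

Definition tree_point (j : 'I_n.+1) : 'I_(n + n).+2 := inord (p j + j).
Definition tree_encode : {set 'I_(n + n).+2} := [set tree_point j | j in [set~ ord0]].

Lemma in_nonzero (j : 'I_n.+1) : (j \in [set~ ord0]) = (0 < j).
Proof. by rewrite !inE lt0n. Qed.

(* Since p j < j <= n, the value p j + j is not truncated by inord. *)
Lemma tree_pointE (j : 'I_n.+1) : 0 < j -> (tree_point j : nat) = p j + j.
Proof.
move=> j0; have pj : p j < j by apply: par; rewrite j0 ltn_ord.
by have lj := ltn_ord j; rewrite /tree_point inordK; lia.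
Qed.

(* Monotonicity of p makes j |-> p j + j strictly increasing. *)
Lemma tree_point_le (a b : 'I_n.+1) :
  0 < a -> 0 < b -> (tree_point a <= tree_point b) = (a <= b).
Proof.
move=> a0 b0; rewrite !tree_pointE //.
have la := ltn_ord a; have lb := ltn_ord b.
by case: (leqP a b) => ab; [have := mono a0 ab lb | have := mono b0 (ltnW ab) la]; lia.
Qed.

Lemma rank_tree_point (j : 'I_n.+1) : 0 < j -> rank tree_encode (tree_point j) = j.
Proof.
move=> j0; rewrite /rank.
have -> : [set s in tree_encode | (s <= tree_point j)%N] =
          [set tree_point i | i in [set i : 'I_n.+1 | 0 < i <= j]].
  apply/setP => s; rewrite inE; apply/andP/imsetP.
    case=> /imsetP [i i0 ->]; rewrite in_nonzero in i0; rewrite tree_point_le // => ij.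
    by exists i; rewrite // inE i0.
  case=> i; rewrite inE => /andP [i0 ij] ->.
  by split; [apply/imsetP; exists i; rewrite // in_nonzero | rewrite tree_point_le].
rewrite card_in_imset ?card_nonzero_upto // => a b.
rewrite !inE => /andP [a0 _] /andP [b0 _] eqab.
by apply/val_inj/eqP; rewrite eqn_leq -!tree_point_le // eqab leqnn.
Qed.

Lemma tree_decode_encode :
  tree_decode tree_encode = [set [set inord (p j); j] | j : 'I_n.+1 in [set~ ord0]].
Proof.
have edgeE (j : 'I_n.+1) : 0 < j ->
    [set (inord (tree_point j - rank tree_encode (tree_point j)) : 'I_n.+1);
         inord (rank tree_encode (tree_point j))] = [set inord (p j); j].
  by move=> j0; rewrite rank_tree_point // tree_pointE // addnK inord_val.
apply/setP => e; apply/imsetP/imsetP => [[v /imsetP [j j0 ->] ->]|[j j0 ->]].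
  by exists j; rewrite // edgeE -?in_nonzero.
by exists (tree_point j); [apply/imsetP; exists j | rewrite edgeE -?in_nonzero].
Qed.

(* The tree has n edges: j |-> {p j, j} is injective since p j < j. *)
Lemma card_tree_decode_encode : #|tree_decode tree_encode| = n.
Proof.
rewrite tree_decode_encode card_in_imset ?cardsC1 ?card_ord // => a b.
rewrite !in_nonzero => a0 b0 eqab.
have ha := ltn_ord a; have hb := ltn_ord b.
have pa : p a < a by apply: par; rewrite a0 ha.
have pb : p b < b by apply: par; rewrite b0 hb.
have : a \in [set (inord (p b) : 'I_n.+1); b] by rewrite -eqab !inE eqxx orbT.
have : b \in [set (inord (p a) : 'I_n.+1); a] by rewrite eqab !inE eqxx orbT.
rewrite !inE => /orP [/eqP eb|/eqP //] /orP [/eqP ea|/eqP //].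
have := congr1 val eb; have := congr1 val ea; rewrite /= !inordK; lia.
Qed.
End TreeCode.

Section ExtraEdges.
Variables n M : nat.

(* At most M further edges, listed as ordered pairs; loops are discarded. *)
Definition extra_decode (t : {ffun 'I_M -> 'I_n.+1 * 'I_n.+1}) : graph n.+1 :=
  [set [set (t i).1; (t i).2] | i in [pred i | (t i).1 != (t i).2]].

Definition edge_pair (e : {set 'I_n.+1}) : 'I_n.+1 * 'I_n.+1 :=
  (nth ord0 (enum e) 0, nth ord0 (enum e) 1).

Lemma edge_pairK (e : {set 'I_n.+1}) : #|e| = 2 ->
  (edge_pair e).1 != (edge_pair e).2 /\ [set (edge_pair e).1; (edge_pair e).2] = e.
Proof.
move=> c2; have := enum_uniq e; have : size (enum e) = 2 by rewrite -cardE.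
rewrite /edge_pair; case E: (enum e) => [|a [|b [|]]] //= _.
rewrite andbT inE => ab; split => //.
by apply/setP => x; rewrite -(mem_enum e) E !inE.
Qed.

Lemma extra_encode (X : graph n.+1) : (forall e, e \in X -> #|e| = 2) -> #|X| <= M ->
  exists t, extra_decode t = X.
Proof.
move=> X2 XM.
exists [ffun i : 'I_M => if i < #|X| then edge_pair (nth set0 (enum X) i) else (ord0, ord0)].
apply/setP => e; apply/imsetP/idP.
  case=> i; rewrite inE ffunE; case: ltnP => iX; last by rewrite eqxx.
  have eX : nth set0 (enum X) i \in X by rewrite -mem_enum mem_nth // -cardE.
  by have [_ ->] := edge_pairK (X2 _ eX) => _ ->.
move=> eX; have ilX : index e (enum X) < #|X| by rewrite cardE index_mem mem_enum.
have [pairP pairE] := edge_pairK (X2 _ eX).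
exists (Ordinal (leq_trans ilX XM)); rewrite ?inE ffunE /= ilX nth_index ?mem_enum //.
Qed.
End ExtraEdges.

Lemma INR_expn m j : INR (m ^ j) = pow (INR m) j.
Proof. by elim: j => [|j IH] //; rewrite expnS -multE mult_INR IH. Qed.

Local Open Scope R_scope.

Lemma exp_INR_le j : exp (INR j) <= pow 3 j.
Proof.
elim: j => [|j IH]; first by rewrite /= exp_0; lra.
rewrite S_INR exp_plus /= Rmult_comm.
have := exp_le_3; have := exp_pos (INR j); have := exp_pos 1.
by move=> *; apply: Rmult_le_compat; lra.
Qed.

(* If j * ln k <= k then k ^ j <= e ^ k <= 3 ^ k. *)
Lemma pow_le_of_mul_ln k j : (2 <= k)%N -> INR j * ln (INR k) <= INR k ->
  (k ^ j <= 3 ^ k)%N.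
Proof.
move=> k2 h; apply/leP/INR_le; rewrite !INR_expn.
have k1 : 1 < INR k by apply: lt_1_INR; apply/ltP.
rewrite -Rpower_pow; last lra.
replace (INR 3) with 3 by (simpl; lra).
apply: Rle_trans (exp_INR_le k); rewrite /Rpower.
by case: (Rle_lt_or_eq_dec _ _ h) => [/exp_increasing|->]; lra.
Qed.

Lemma excess_mul_ln k m : (2 <= k)%N ->
  INR m <= INR (k - 1) + INR k / ln (INR k) ->
  INR (m - (k - 1)) * ln (INR k) <= INR k.
Proof.
move=> k2 h.
have k1 : 1 < INR k by apply: lt_1_INR; apply/ltP.
have lk : 0 < ln (INR k) by rewrite -ln_1; apply: ln_increasing; lra.
case: (leqP m (k - 1)) => mk.
  by rewrite (eqP mk) /= Rmult_0_l; lra.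
rewrite -minusE minus_INR; last by apply/leP; rewrite minusE ltnW.
have e : INR k / ln (INR k) * ln (INR k) = INR k by field; lra.
have : (INR m - INR (k - 1)) * ln (INR k) <= INR k / ln (INR k) * ln (INR k).
  by apply: Rmult_le_compat_r; lra.
by rewrite minusE; lra.
Qed.

Local Close Scope R_scope.

Lemma excess_bound n (G : graph n.+1) : good G -> n.+1 ^ (#|G| - n) <= 3 ^ n.+1.
Proof.
case: n G => [|n] G /and3P [_ _]; first by rewrite exp1n expn_gt0.
rewrite /edge_bound_ok /=; case: Rle_dec => // h _.
by apply: pow_le_of_mul_ln => //; have := @excess_mul_ln n.+2 #|G| isT h; rewrite subn1.
Qed.

Definition code n M : Type :=
  ({set 'I_(n + n).+2} * {ffun 'I_M -> 'I_n.+1 * 'I_n.+1})%type.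

Definition decode n M (c : code n M) : graph n.+1 := tree_decode c.1 :|: extra_decode c.2.

Lemma decode_onto n M (G : graph n.+1) : good G -> #|G| - n <= M ->
  exists c : code n M, [set H | isob G H] = [set H | isob (decode c) H].
Proof.
move=> /and3P [sG cG _] GM.
have [s [p [par mono]]] := bfs_relabel cG.
have par' j : 0 < j < n.+1 -> p j < j by move/par => [].
pose D := act s G; pose T := tree_decode (tree_encode n p).
have TD : T \subset D.
  rewrite /T tree_decode_encode //; apply/subsetP => e /imsetP [j j0 ->].
  rewrite in_nonzero in j0.
  have /par [_] : 0 < j < n.+1 by rewrite j0 ltn_ord.
  by rewrite inord_val.
have /simple_graphP D2 : simple_graph D by apply: simple_act.
have XM : #|D :\: T| <= M.
  by rewrite cardsDS // card_act card_tree_decode_encode.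
have [t tX] := @extra_encode n M (D :\: T) (fun e eX => D2 e (subsetP (subsetDl D T) e eX)) XM.
exists (tree_encode n p, t).
have -> : decode (tree_encode n p, t) = D by rewrite /decode /= tX -[RHS](setID D T) (setIidPr TD).
by apply: isob_class; apply/isobP; exists s.
Qed.

Lemma card_code n M : #|{: code n M}| = 4 ^ n.+1 * (n.+1 ^ M) ^ 2.
Proof.
rewrite card_prod -[in LHS]cardsT -powersetT card_powerset cardsT card_ffun.
rewrite card_prod !card_ord.
have -> : (n + n).+2 = 2 * n.+1 by lia.
by rewrite expnM expnMn [(_ ^ M) ^ 2]expnS expn1.
Qed.

Theorem mainTheorem6 (k : nat) (hk : (1 <= k)%N) :
  (num_unlabeled_good k < 100 ^ k)%N.
Proof.
case: k hk => [//|n] _.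
pose M := \max_(G : graph n.+1 | good G) (#|G| - n).
have leM (G : graph n.+1) : good G -> #|G| - n <= M.
  by move=> gG; apply: (leq_bigmax_cond (F := fun G : graph n.+1 => #|G| - n)).
have powM : n.+1 ^ M <= 3 ^ n.+1.
  apply: (big_ind (fun m => n.+1 ^ m <= 3 ^ n.+1)); first by rewrite expn_gt0.
    by move=> a b ha hb; case: (leqP a b) => ab; rewrite ?(maxn_idPr ab) ?(maxn_idPl (ltnW ab)).
  exact: excess_bound.
have classes_le : num_unlabeled_good n.+1 <= #|{: code n M}|.
  apply: leq_trans (leq_imset_card (fun c : code n M => [set H | isob (decode c) H]) _).
  apply/subset_leq_card/subsetP => C /imsetP [G gG ->].
  by have [c ->] := decode_onto gG (leM G gG); apply/imsetP; exists c.
apply: leq_ltn_trans classes_le _; rewrite card_code.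
apply: (@leq_ltn_trans (4 ^ n.+1 * (3 ^ n.+1) ^ 2)).
  by rewrite leq_mul2l leq_exp2r // powM orbT.
by rewrite -expnM [(n.+1 * 2)]mulnC expnM -expnMn ltn_exp2r.
Qed.
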